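(* Let $A$ be a $t\times T$ binary matrix of rank $t$ over $\mathbb F_2$, and let $v\in\mathbb F_2^T$ be a minimal nonzero vector of the row space of $A$ (i.e. no nonzero vector in the row space has support strictly contained in the support of $v$). Let $B$ be the $t\times|v|$ matrix obtained from $A$ by deleting all columns whose index is not in the support of $v$ (here $|v|$ is the size of the support), and let $A'$ be the $(t+1)\times2|v|$ matrix $$A'=\left[\begin{array}{c|c} B & B\\ 1\cdots1 & 0\cdots0\end{array}\right].$$ Then for every $f:\{0,1\}^n\to\{-1,1\}$, $\mathbb E_A(f)\le\sqrt{\mathbb E_{A'}(f)}$ (in particular $\mathbb E_{A'}(f)\ge0$).
   Context: $\{0,1\}^n$ is identified with $\mathbb F_2^n$. For a $t\times T$ binary matrix $A=(A_{ij})$, $\mathbb E_A(f)=\mathbb E_{y_1,\dots,y_t}\prod_{j=1}^T f\big(\sum_{i=1}^tA_{ij}y_i\big)$, with $y_1,\dots,y_t$ independent uniform in $\{0,1\}^n$. *)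

From HB Require Import structures.
From mathcomp Require Import all_boot all_order all_algebra.
Set Implicit Arguments. Unset Strict Implicit. Unset Printing Implicit Defensive.
Import Order.TTheory GRing.Theory Num.Theory.
Local Open Scope ring_scope.

Definition EA (R : numFieldType) (n t T : nat) (A : 'M['F_2]_(t, T))
  (f : 'rV['F_2]_n -> R) : R :=
  (#|{ffun 'I_t -> 'rV['F_2]_n}|%:R)^-1 *
  \sum_(y : {ffun 'I_t -> 'rV['F_2]_n})
     \prod_(j < T) f (\sum_(i < t) A i j *: y i).

Definition supp (T : nat) (v : 'rV['F_2]_T) : {set 'I_T} :=
  [set j | v 0 j != 0].

Definition minimal_in_rowspace (t T : nat) (A : 'M['F_2]_(t, T))
  (v : 'rV['F_2]_T) : Prop :=
  [/\ v != 0, (v <= A)%MS &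
      forall w : 'rV['F_2]_T, (w <= A)%MS -> w != 0 -> ~~ (supp w \proper supp v)].

(* B: columns of A indexed by the support of v (in increasing order) *)
Definition restrict_cols (t T : nat) (A : 'M['F_2]_(t, T)) (v : 'rV['F_2]_T)
  : 'M['F_2]_(t, #|supp v|) :=
  \matrix_(i < t, l < #|supp v|) A i (enum_val l).

Definition Aprime (t T : nat) (A : 'M['F_2]_(t, T)) (v : 'rV['F_2]_T)
  : 'M['F_2]_(t + 1, #|supp v| + #|supp v|) :=
  col_mx (row_mx (restrict_cols A v) (restrict_cols A v))
         (row_mx (const_mx 1) 0).

(* Write v = c A.  Replacing each y_i by y_i + c_i w preserves the uniform
   distribution of (y_1, ..., y_t), leaves the columns of A outside supp v
   unchanged and adds w to the columns in supp v.  Averaging over w splits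
   E_A(f) as E_y [g(y) E_w Q(y, w)], where g(y) = +-1 is the product over the
   columns outside supp v and Q(y, w) = prod_{j in supp v} f(x_j + w), with
   x_j = sum_i A_ij y_i.  The same translation, with the extra variable of A'
   playing the role of w, gives E_A'(f) = E_y [(E_w Q(y, w))^2].  Jensen's
   inequality E[X]^2 <= E[X^2] concludes.  Only v \in rowspace(A) is used:
   neither the rank of A nor the minimality of v matters. *)

From HB Require Import structures.
From mathcomp Require Import all_boot all_order all_algebra.
From mathcomp Require Import ring.
Import Order.TTheory GRing.Theory Num.Theory.
Set Implicit Arguments.
Unset Strict Implicit.
Unset Printing Implicit Defensive.
Local Open Scope ring_scope.

Section Mean.
Variable R : numFieldType.

Definition mean (I : finType) (F : I -> R) : R := (#|I|%:R)^-1 * \sum_i F i.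

Lemma eq_mean (I : finType) (F G : I -> R) : F =1 G -> mean F = mean G.
Proof. by move=> FG; rewrite /mean (eq_bigr _ (fun i _ => FG i)). Qed.

Lemma mean_bij (I J : finType) (h : I -> J) (F : J -> R) :
  bijective h -> mean F = mean (F \o h).
Proof.
by move=> hB; rewrite /mean (bij_eq_card hB) (reindex h (onW_bij _ hB)).
Qed.

Lemma mean_pair (I J : finType) (F : I * J -> R) :
  mean F = mean (fun i => mean (fun j => F (i, j))).
Proof.
rewrite /mean card_prod natrM invfM -mulrA -mulr_sumr pair_big.
by congr (_ * (_ * _)); apply: eq_bigr => -[].
Qed.

Lemma mean_cst (I : finType) (i0 : I) (a : R) : mean (fun _ : I => a) = a.
Proof.
rewrite /mean sumr_const -[a *+ _]mulr_natl mulKf //.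
by rewrite pnatr_eq0 -lt0n; apply/card_gt0P; exists i0.
Qed.

Lemma meanMl (I : finType) (a : R) (F : I -> R) :
  mean (fun i => a * F i) = a * mean F.
Proof. by rewrite /mean -mulr_sumr mulrCA. Qed.

Lemma meanMr (I : finType) (a : R) (F : I -> R) :
  mean (fun i => F i * a) = mean F * a.
Proof. by rewrite /mean -mulr_suml mulrA. Qed.

Lemma meanD (I : finType) (F G : I -> R) :
  mean (fun i => F i + G i) = mean F + mean G.
Proof. by rewrite /mean big_split mulrDr. Qed.

Lemma meanB (I : finType) (F G : I -> R) :
  mean (fun i => F i - G i) = mean F - mean G.
Proof. by rewrite /mean sumrB mulrBr. Qed.

Lemma mean_exchange (I J : finType) (F : I -> J -> R) :
  mean (fun i => mean (F i)) = mean (fun j => mean (F^~ j)).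
Proof.
rewrite /mean -!mulr_sumr exchange_big /= !mulr_sumr.
by apply: eq_bigr => j _; rewrite mulrCA.
Qed.

Lemma mean_ge0 (I : finType) (F : I -> R) :
  (forall i, 0 <= F i) -> 0 <= mean F.
Proof.
by move=> F_ge0; rewrite /mean mulr_ge0 ?invr_ge0 ?ler0n ?sumr_ge0.
Qed.

End Mean.

Lemma sqr_mean_le_mean_sqr (R : realFieldType) (I : finType) (F : I -> R) :
  mean F ^+ 2 <= mean (fun i => F i ^+ 2).
Proof.
have [I0 | /card_gt0P [i0 _]] := posnP #|I|.
  by rewrite /mean I0 invr0 !mul0r expr0n.
set m := mean F.
have : 0 <= mean (fun i => (F i - m) ^+ 2).
  by apply: mean_ge0 => i; exact: sqr_ge0.
have -> : mean (fun i => (F i - m) ^+ 2) = mean (fun i => F i ^+ 2) - m ^+ 2.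
  under eq_mean => i do rewrite sqrrB -mulrnAr.
  rewrite meanD meanB meanMr (mean_cst i0) -/m; ring.
by rewrite subr_ge0.
Qed.

Lemma mean_le_sqrt_mean_sqr (R : rcfType) (I : finType) (F : I -> R) :
  mean F <= Num.sqrt (mean (fun i => F i ^+ 2)).
Proof.
rewrite (le_trans (ler_norm _)) // -sqrtr_sqr ler_sqrt ?sqr_mean_le_mean_sqr //.
by apply: mean_ge0 => i; exact: sqr_ge0.
Qed.

Lemma F2_neq0 (x : 'F_2) : x != 0 -> x = 1.
Proof. by case: x => -[|[|m]] // lt12 _; apply/val_inj. Qed.

Section ColumnCombinations.
Variables (n t T : nat) (A : 'M['F_2]_(t, T)).

Definition col_comb (y : {ffun 'I_t -> 'rV['F_2]_n}) (j : 'I_T) : 'rV['F_2]_n :=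
  \sum_(i < t) A i j *: y i.

Definition outer (c : 'rV['F_2]_t) (w : 'rV['F_2]_n)
  : {ffun 'I_t -> 'rV['F_2]_n} := [ffun i => c 0 i *: w].

Lemma col_combD y z j : col_comb (y + z) j = col_comb y j + col_comb z j.
Proof.
by rewrite /col_comb -big_split; apply: eq_bigr => i _; rewrite ffunE scalerDr.
Qed.

Lemma col_comb_outer c w j : col_comb (outer c w) j = (c *m A) 0 j *: w.
Proof.
rewrite /col_comb mxE scaler_suml; apply: eq_bigr => i _.
by rewrite ffunE scalerA mulrC.
Qed.

End ColumnCombinations.

Section Decomposition.
Variables (R : numFieldType) (n t T : nat) (A : 'M['F_2]_(t, T)).
Variables (v : 'rV['F_2]_T) (c : 'rV['F_2]_t) (f : 'rV['F_2]_n -> R).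
Hypothesis vE : v = c *m A.
Local Notation Y := {ffun 'I_t -> 'rV['F_2]_n}.

Definition off_supp_prod (y : Y) : R :=
  \prod_(j < T | v 0 j == 0) f (col_comb A y j).

Definition supp_prod (y : Y) (w : 'rV['F_2]_n) : R :=
  \prod_(l < #|supp v|) f (col_comb A y (enum_val l) + w).

Lemma EAE (t' T' : nat) (A' : 'M['F_2]_(t', T')) :
  EA A' f = mean (fun y => \prod_(j < T') f (col_comb A' y j)).
Proof. by []. Qed.

Lemma col_comb_supp (y : Y) w (l : 'I_#|supp v|) :
  col_comb A (y + outer c w) (enum_val l) = col_comb A y (enum_val l) + w.
Proof.
have := enum_valP l; rewrite inE => /F2_neq0 vl.
by rewrite col_combD col_comb_outer -vE vl scale1r.
Qed.

Lemma prod_col_comb_translate (y : Y) w :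
  \prod_(j < T) f (col_comb A (y + outer c w) j)
  = off_supp_prod y * supp_prod y w.
Proof.
rewrite (bigID (fun j => v 0 j == 0)) /=; congr (_ * _).
  apply: eq_bigr => j /eqP vj0.
  by rewrite col_combD col_comb_outer -vE vj0 scale0r addr0.
rewrite (eq_bigl (fun j => j \in supp v)); last by move=> j; rewrite inE.
by rewrite big_enum_val; apply: eq_bigr => l _; rewrite col_comb_supp.
Qed.

Lemma supp_prod_translate (y : Y) w s :
  supp_prod (y + outer c w) s = supp_prod y (w + s).
Proof. by apply: eq_bigr => l _; rewrite col_comb_supp addrA. Qed.

Lemma mean_translate (G : Y -> R) :
  mean G = mean (fun w : 'rV['F_2]_n => mean (fun y : Y => G (y + outer c w))).
Proof.
have G_translate w : mean (fun y : Y => G (y + outer c w)) = mean G.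
  by rewrite (mean_bij G (Bijective (addrK (outer c w)) (subrK (outer c w)))).
by rewrite (eq_mean G_translate) (mean_cst 0).
Qed.

Lemma EA_decomp :
  EA A f = mean (fun y => off_supp_prod y * mean (supp_prod y)).
Proof.
rewrite EAE mean_translate.
under eq_mean => w do under eq_mean => y do rewrite prod_col_comb_translate.
by rewrite mean_exchange; apply: eq_mean => y; rewrite meanMl.
Qed.

Definition extend (p : Y * 'rV['F_2]_n) : {ffun 'I_(t + 1) -> 'rV['F_2]_n} :=
  [ffun i => if split i is inl i' then p.1 i' else p.2].

Lemma extend_lshift y s i : extend (y, s) (lshift 1 i) = y i.
Proof. by rewrite ffunE (unsplitK (inl _ i)). Qed.

Lemma extend_rshift y s k : extend (y, s) (rshift t k) = s.
Proof. by rewrite ffunE (unsplitK (inr _ k)). Qed.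

Lemma extend_bij : bijective extend.
Proof.
apply: inj_card_bij; last first.
  by rewrite card_prod !card_ffun !card_ord addn1 expnSr.
move=> [y s] [y' s'] eq_ext; congr (_, _); last first.
  by rewrite -(extend_rshift y s ord0) eq_ext extend_rshift.
by apply/ffunP => i; rewrite -(extend_lshift y s) eq_ext extend_lshift.
Qed.

Lemma col_comb_Aprime_lshift y s (l : 'I_#|supp v|) :
  col_comb (Aprime A v) (extend (y, s)) (lshift _ l)
  = col_comb A y (enum_val l) + s.
Proof.
rewrite /col_comb big_split_ord big_ord1 col_mxEd row_mxEl mxE scale1r.
rewrite extend_rshift.
congr (_ + _); apply: eq_bigr => i _.
by rewrite col_mxEu row_mxEl mxE extend_lshift.
Qed.

Lemma col_comb_Aprime_rshift y s (l : 'I_#|supp v|) :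
  col_comb (Aprime A v) (extend (y, s)) (rshift _ l)
  = col_comb A y (enum_val l).
Proof.
rewrite /col_comb big_split_ord big_ord1 col_mxEd row_mxEr.
rewrite [(0 : 'M_(1, _)) _ _]mxE scale0r.
rewrite -[RHS]addr0; congr (_ + _); apply: eq_bigr => i _.
by rewrite col_mxEu row_mxEr mxE extend_lshift.
Qed.

Lemma prod_col_comb_Aprime y s :
  \prod_j f (col_comb (Aprime A v) (extend (y, s)) j)
  = supp_prod y s * supp_prod y 0.
Proof.
rewrite big_split_ord; congr (_ * _); apply: eq_bigr => l _.
  by rewrite col_comb_Aprime_lshift.
by rewrite col_comb_Aprime_rshift addr0.
Qed.

Lemma EAprime_decomp :
  EA (Aprime A v) f = mean (fun y => mean (supp_prod y) ^+ 2).
Proof.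
rewrite EAE (mean_bij _ extend_bij) mean_pair.
under eq_mean => y do under eq_mean => s do rewrite /= prod_col_comb_Aprime.
rewrite mean_translate.
under eq_mean => w do under eq_mean => y do under eq_mean => s do
  rewrite !supp_prod_translate addr0.
rewrite mean_exchange; apply: eq_mean => y.
under eq_mean => w do
  rewrite meanMr -(mean_bij _ (Bijective (addKr w) (addNKr w))).
by rewrite meanMl expr2.
Qed.

End Decomposition.

Theorem proposition7p6 (R : rcfType) (n t T : nat) (A : 'M['F_2]_(t, T))
  (v : 'rV['F_2]_T) :
  \rank A = t ->
  minimal_in_rowspace A v ->
  forall f : 'rV['F_2]_n -> R, (forall x, f x = 1 \/ f x = -1) ->
  0 <= EA (Aprime A v) f /\ EA A f <= Num.sqrt (EA (Aprime A v) f).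
Proof.
move=> _ [_ /submxP [c vE] _] f f_sign.
have f_sqr x : f x ^+ 2 = 1 by case: (f_sign x) => ->; rewrite ?sqrrN expr1n.
set g := off_supp_prod A v f.
have g_sqr y : g y ^+ 2 = 1.
  by rewrite /g /off_supp_prod -prodrXl; apply: big1 => j _; rewrite f_sqr.
set b := fun y => g y * mean (supp_prod A v f y).
have EAprime_b : EA (Aprime A v) f = mean (fun y => b y ^+ 2).
  rewrite (EAprime_decomp f vE); apply: eq_mean => y.
  by rewrite /b [RHS]exprMn g_sqr mul1r.
rewrite (EA_decomp f vE) -/b EAprime_b; split.
  by apply: mean_ge0 => y; exact: sqr_ge0.
exact: mean_le_sqrt_mean_sqr.
Qed.
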